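(* When the segment-based (GK) algorithm described in the context is run, after the deletion step at any time step $t$, the number of type-1 elements stored in QS is $O(\ell\log t)$.
   Context: A stream of elements from a totally ordered universe arrives one by one. Let $\ell=1/\varepsilon$ be an integer. The stream is partitioned into consecutive chunks of $\ell$ elements; time step $t$ is the arrival of the $t$-th chunk, and $t_0(x)$ is the time step in which $x$ arrives. The summary QS stores elements $e_1<\dots<e_s$ seen so far, each with integers $\mathrm{rmin}(e),\mathrm{rmax}(e)$; by convention $\mathrm{rmin}(e_0)=0$. An element $+\infty$, larger than all others, is inserted at the start of the stream and is always stored as $e_s$. Insert$(x)$: let $e_i$ be the smallest stored element with $e_i>x$; set $\mathrm{rmin}(x)=\mathrm{rmin}(e_{i-1})+1$, $\mathrm{rmax}(x)=\mathrm{rmax}(e_i)$, increase $\mathrm{rmin}(e_j),\mathrm{rmax}(e_j)$ by one for all $j\ge i$, and store $x$. Delete$(e_i)$: remove $e_i$, leaving all other values unchanged. Define $g_i=\mathrm{rmin}(e_i)-\mathrm{rmin}(e_{i-1})$ and $\Delta_i=\mathrm{rmax}(e_i)-\mathrm{rmin}(e_i)$. Band values: each element $x$ has an integer $\mathbf{v}(x)$: at time step $t_0(x)$, $\mathbf{v}(x)=0$; at each time step $t>t_0(x)$, if $t$ is a multiple of $2^{\mathbf{v}(x)}$ then $\mathbf{v}(x)$ is increased by one. The segment $\mathrm{seg}(e_i)$ of a stored element $e_i$ is the maximal set of consecutive stored elements $e_j,\dots,e_{i-1}$ all with band value strictly less than $\mathbf{v}(e_i)$; $g^*_i=g_i+\sum_{e_k\in\mathrm{seg}(e_i)}g_k$.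 Algorithm: at each time step $t$: (i) run Insert on each element of the chunk; (ii) (deletion step) while there is a stored $e_i$ ($i<s$) with $\mathbf{v}(e_i)\le\mathbf{v}(e_{i+1})$ and $g^*_i+g_{i+1}+\Delta_{i+1}\le t$, run Delete on $e_i$ and on every element of $\mathrm{seg}(e_i)$. After the deletion step at time $t$, a stored element $e_i$ ($i<s$) is type-1 if $\mathbf{v}(e_i)>\mathbf{v}(e_{i+1})$, and type-2 if it is not type-1 (in which case $g^*_i+g_{i+1}+\Delta_{i+1}>t$). *)

From mathcomp Require Import all_boot all_order.
Set Implicit Arguments. Unset Strict Implicit. Unset Printing Implicit Defensive.
Import Order.TTheory.
Local Open Scope order_scope.

Fixpoint band (t0 t : nat) : nat :=
  match t with
  | 0 => 0
  | t'.+1 => if (t <= t0)%N then 0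
             else let b := band t0 t' in
                  if (2 ^ b %| t)%N then b.+1 else b
  end.

Section GK.
Context {d : Order.disp_t} {T : orderType d}.

(* A stored element: its key (None = +infinity), its arrival time step,
   rmin and rmax. *)
Record item := Item { key : option T; tin : nat; rmin : nat; rmax : nat }.

Definition dflt : item := Item None 0 0 0.

(* +infinity: inserted at the start of the stream (time step 0), into the
   empty summary: rmin = rmin(e_0) + 1 = 1, rmax = 1. *)
Definition inf_item : item := Item None 0 1 1.

Definition gtk (k : option T) (x : T) : bool :=
  if k is Some a then (x < a)%O else true.

(* Positions are 0-based: position i of the list is e_{i+1} of the paper. *)
Definition nthi (L : seq item) (i : nat) : item := nth dflt L i.

Definition rmin_prev (L : seq item) (i : nat) : nat :=
  if i is i'.+1 then rmin (nthi L i') else 0.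

Definition incr (e : item) : item :=
  Item (key e) (tin e) (rmin e).+1 (rmax e).+1.

Definition insert (x : T) (t0 : nat) (L : seq item) : seq item :=
  let i := find (fun e => gtk (key e) x) L in
  take i L ++ Item (Some x) t0 (rmin_prev L i).+1 (rmax (nthi L i))
          :: map incr (drop i L).

Definition gg (L : seq item) (i : nat) : nat := rmin (nthi L i) - rmin_prev L i.
Definition Delta (L : seq item) (i : nat) : nat := rmax (nthi L i) - rmin (nthi L i).

Definition vb (t : nat) (L : seq item) (i : nat) : nat := band (tin (nthi L i)) t.

(* seg(e_i): maximal run of consecutive elements immediately before position i
   all having band value strictly smaller than that of position i.
   segstart is the position of its first element (= i if empty). *)
Definition seglen (t : nat) (L : seq item) (i : nat) : nat :=
  find (fun e => ~~ (band (tin e) t < vb t L i)%N) (rev (take i L)).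
Definition segstart (t : nat) (L : seq item) (i : nat) : nat := i - seglen t L i.

Definition gstar (t : nat) (L : seq item) (i : nat) : nat :=
  gg L i + \sum_(segstart t L i <= k < i) gg L k.

Definition deletable (t : nat) (L : seq item) (i : nat) : bool :=
  [&& (i.+1 < size L)%N, (vb t L i <= vb t L i.+1)%N &
      (gstar t L i + gg L i.+1 + Delta L i.+1 <= t)%N].

Definition delete_at (t : nat) (L : seq item) (i : nat) : seq item :=
  take (segstart t L i) L ++ drop i.+1 L.

Inductive del_steps (t : nat) : seq item -> seq item -> Prop :=
| del_refl L : del_steps t L L
| del_step L i L' : deletable t L i -> del_steps t (delete_at t L i) L' ->
                    del_steps t L L'.

Definition del_final (t : nat) (L L' : seq item) : Prop :=
  del_steps t L L' /\ forall i, ~~ deletable t L' i.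

(* Step (i) at time step t (1-based): insert the t-th chunk of l elements,
   i.e. stream elements (t-1)*l, ..., t*l - 1 (0-based stream s), in order. *)
Definition insert_chunk (l : nat) (s : nat -> T) (t : nat) (L : seq item) :=
  foldl (fun L k => insert (s k) t L) L (iota ((t.-1) * l) l).

(* run l s t L : L is a possible content of QS after the deletion step of
   time step t (t = 0: just +infinity). *)
Inductive run (l : nat) (s : nat -> T) : nat -> seq item -> Prop :=
| run0 : run l s 0 [:: inf_item]
| runS t L L' : run l s t L -> del_final t.+1 (insert_chunk l s t.+1 L) L' ->
                run l s t.+1 L'.

Definition type1 (t : nat) (L : seq item) (i : nat) : bool :=
  (i.+1 < size L)%N && (vb t L i.+1 < vb t L i)%N.

Definition num_type1 (t : nat) (L : seq item) : nat :=
  count (type1 t L) (iota 0 (size L)).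

End GK.

From mathcomp Require Import all_boot all_order zify.
Set Implicit Arguments. Unset Strict Implicit. Unset Printing Implicit Defensive.

(* Let e_i be type-1 and let e_j be the first later element whose band value is at
   least v(e_i), so that everything strictly between them has a smaller band value.
   Insert, the passage of time and Delete preserve an invariant which then yields a
   time step s0 (the anchor of e_i) by which e_i had arrived, after which everything
   strictly between e_i and e_j arrived, and such that rmax(e_j) - rmin(e_i) is at
   most s0 + 1 plus the number of stream elements arrived after s0 with key in
   [e_i, e_j).  The element e_{j-1} survived the deletion step, which makes
   rmax(e_j) - rmin(e_i) exceed t, so at least t - s0 of the last (t - s0) l stream
   elements fall in that key range.
   Group the type-1 elements by k = floor(log2 (t - s0)).  If four elements of a
   group shared a stream element in their key ranges, these ranges would be nested,
   so band values would strictly drop twice along the chain, whereas the band value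
   of an element of age a is within one of log2 a.  Hence each of the last 2^(k+1) l
   stream elements is charged by at most three elements of the group, each of which
   needs 2^k charges: a group has at most 6 l elements, and there are at most
   log2 t + 1 groups. *)

(** * Band values *)

Lemma band_before t0 t : t <= t0 -> band t0 t = 0.
Proof. by case: t => [|t] //= ->. Qed.

Lemma bandS t0 t : t0 <= t ->
  band t0 t.+1 = if 2 ^ band t0 t %| t.+1 then (band t0 t).+1 else band t0 t.
Proof. by move=> le_t0t /=; rewrite ltnNge le_t0t. Qed.

Lemma band_succ_mono t0 t1 t : t0 <= t -> t1 <= t ->
  band t0 t <= band t1 t -> band t0 t.+1 <= band t1 t.+1.
Proof.
move=> le0 le1 le01; rewrite !bandS //.
case: (ltngtP (band t0 t) (band t1 t)) le01 => // [lt01 _|-> _]; last by case: ifP.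
by do 2 case: ifP => _ //; lia.
Qed.

Lemma band_arrival_anti t0 t1 t : t0 <= t1 -> band t1 t <= band t0 t.
Proof.
move=> le01; elim: t => [|t IH] //.
case: (leqP t.+1 t1) => [le|lt]; first by rewrite band_before.
by apply: band_succ_mono => //; lia.
Qed.

Lemma dvdn_gap q m w : q %| m -> q %| w -> m < w -> m + q <= w.
Proof.
move=> dm dw lt; have : q <= w - m by apply: dvdn_leq; [lia | rewrite dvdn_sub].
lia.
Qed.

Lemma ltn_add_of_eq_divn q m t : 0 < q -> t %/ q = m %/ q -> t < m + q.
Proof.
by move=> q_gt0 eq_div; have := ltn_ceil t q_gt0; have := leq_divM m q; rewrite eq_div; lia.
Qed.

(* m is the time step at which the band value last increased (the arrival step if it never did). *)
Lemma band_last_increase t0 t : t0 <= t ->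
  exists m, [/\ t0 <= m <= t, t %/ 2 ^ band t0 t = m %/ 2 ^ band t0 t,
    m - t0 < 2 ^ band t0 t &
    0 < band t0 t -> (2 ^ (band t0 t).-1 %| m) && (2 ^ (band t0 t).-1 <= m - t0)].
Proof.
elim: t => [|t IH] le_t0t.
  by exists 0; rewrite band_before //; split => //; lia.
case: (leqP t0 t) => [le|lt]; last first.
  have -> : t0 = t.+1 by lia.
  by exists t.+1; rewrite band_before //; split => //; lia.
have [m [/andP[le0m lemt] eq_div lt_m gt0]] := IH le.
set b := band t0 t in eq_div lt_m gt0.
have q_gt0 : 0 < 2 ^ b by rewrite expn_gt0.
rewrite bandS // -/b; case: ifP => dv; last first.
  exists m; split => //; last by rewrite divnS // dv.
  by have := ltn_add_of_eq_divn q_gt0 eq_div; lia.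
have le_succ : t.+1 <= m + 2 ^ b.
  rewrite -(divnK dv) divnS // dv eq_div mulnDl mul1n addnC leq_add2r.
  exact: leq_divM.
exists t.+1; split => //; first lia.
- rewrite expnS; lia.
- move=> _; rewrite dv /=; case: (posnP b) => [-> | b_gt0]; first lia.
  have /andP[dm le_half] := gt0 b_gt0.
  have dt : 2 ^ b.-1 %| t.+1 by apply: dvdn_trans dv; apply: dvdn_exp2l; lia.
  have := dvdn_gap dm dt; have : 2 ^ b = 2 ^ b.-1 + 2 ^ b.-1.
    by rewrite -{1}(prednK b_gt0) expnS mul2n addnn.
  lia.
Qed.

Lemma band_age_ltn t0 t : t0 <= t -> t - t0 < 2 ^ (band t0 t).+1.
Proof.
move=> le; have [m [/andP[le0m lemt] eq_div lt_m _]] := band_last_increase le.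
have := ltn_add_of_eq_divn (expn_gt0 2 (band t0 t)) eq_div.
rewrite expnS; lia.
Qed.

Lemma band_age_geq t0 t : t0 <= t -> 0 < band t0 t -> 2 ^ (band t0 t).-1 <= t - t0.
Proof.
move=> le b_gt0; have [m [/andP[_ lemt] _ _ /(_ b_gt0) /andP[_ le_half]]] := band_last_increase le.
lia.
Qed.

Lemma band_leq_of_age t0 t k : t0 <= t -> t - t0 < 2 ^ k.+1 -> band t0 t <= k.+1.
Proof.
move=> le lt; case: (posnP (band t0 t)) => [->//|b_gt0].
have : 2 ^ (band t0 t).-1 < 2 ^ k.+1 by have := band_age_geq le b_gt0; lia.
rewrite ltn_exp2l //; lia.
Qed.

Lemma band_geq_of_age t0 t k : t0 <= t -> 2 ^ k <= t - t0 -> k <= band t0 t.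
Proof.
move=> le le_k; have : 2 ^ k < 2 ^ (band t0 t).+1 by have := band_age_ltn le; lia.
by rewrite ltn_exp2l.
Qed.

(** * Double counting *)

Lemma count_sum (A : Type) (a : pred A) (r : seq A) : count a r = \sum_(x <- r) a x.
Proof. by rewrite -sum1_count big_mkcond. Qed.

Lemma sum_count_exchange (A B : Type) (P : A -> B -> bool) (r1 : seq A) (r2 : seq B) :
  \sum_(x <- r1) count (P x) r2 = \sum_(y <- r2) count (P^~ y) r1.
Proof.
under eq_bigr do rewrite count_sum.
by rewrite exchange_big; under [RHS]eq_bigr do rewrite count_sum.
Qed.

Lemma count_partition (A : eqType) (a : pred A) (f : A -> nat) (K : nat) (r : seq A) :
  {in r, forall x, a x -> f x < K} ->
  count a r = \sum_(k < K) count (fun x => a x && (f x == k)) r.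
Proof.
elim: r => [|x r IH] fK /=; first by rewrite big1.
rewrite big_split /= -IH => [|y y_r]; last by apply: fK; rewrite inE y_r orbT.
congr (_ + _); case: (boolP (a x)) => [ax | _]; last by rewrite big1.
rewrite (bigD1 (Ordinal (fK x (mem_head x r) ax))) //= eqxx big1 // => k ne.
by case: eqP => // fx_k; case/eqP: ne; apply: val_inj.
Qed.

(** * The invariant *)

Import Order.TTheory.

Section QS.
Context {d : Order.disp_t} {T : orderType d}.
Variables (l : nat) (s : nat -> T).
Local Notation item := (@item d T).
Implicit Types (L : seq item).

Definition key_le (k1 k2 : option T) : bool :=
  match k1, k2 with
  | _, None => true
  | None, Some _ => false
  | Some a, Some b => (a <= b)%O
  end.

Lemma key_le_refl k : key_le k k.
Proof. by case: k => //= a. Qed.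

Lemma key_le_trans k1 k2 k3 : key_le k1 k2 -> key_le k2 k3 -> key_le k1 k3.
Proof. by case: k1 k2 k3 => [a|] [b|] [c|] //=; apply: le_trans. Qed.

Lemma key_le_total k1 k2 : ~~ key_le k1 k2 -> key_le k2 k1.
Proof. by case: k1 k2 => [a|] [b|] //=; rewrite -ltNge => /ltW. Qed.

Lemma gtkNle k x : gtk k x = ~~ key_le k (Some x).
Proof. by case: k => //= a; rewrite ltNge. Qed.

Lemma key_le_gtk k1 k2 x : key_le k1 k2 -> gtk k1 x -> gtk k2 x.
Proof. by rewrite !gtkNle => le12; apply: contra => /(key_le_trans le12). Qed.

Definition in_key_range ki kj (y : T) : bool := key_le ki (Some y) && gtk kj y.

Definition arrivals (s0 n : nat) ki kj : nat :=
  count (fun m => in_key_range ki kj (s m)) (index_iota (s0 * l) n).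

Lemma arrivals_mono s0 n ki kj : arrivals s0 n ki kj <= arrivals s0 n.+1 ki kj.
Proof.
rewrite /arrivals /index_iota; case: (leqP (s0 * l) n) => [le|lt].
  by rewrite subSn // -addn1 iotaD count_cat leq_addr.
by have -> : n - s0 * l = 0 by lia.
Qed.

Lemma arrivalsS s0 n ki kj : s0 * l <= n ->
  arrivals s0 n.+1 ki kj = arrivals s0 n ki kj + in_key_range ki kj (s n).
Proof.
by move=> le; rewrite /arrivals /index_iota subSn // -addn1 iotaD count_cat /= subnKC // addn0.
Qed.

Definition spread L i j : nat := rmax (nthi L j) - rmin (nthi L i).

Definition valley u L i j : Prop :=
  forall k, i < k < j -> vb u L k < vb u L i /\ vb u L k < vb u L j.

(* Invariant for the pair of positions i < j in the current time step u, when the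
   first n stream elements have been inserted: both ends arrived by time step s0,
   everything strictly between them arrived after s0, and the rank uncertainty is
   paid for by s0 + 1 and the stream elements after s0 with keys in [e_i, e_j).
   Before time step u is complete, s0 = u is only possible if e_i or e_j is new. *)
Definition pair_bound u n L i j : Prop :=
  valley u L i j ->
  exists s0, [/\ tin (nthi L i) <= s0 /\ tin (nthi L j) <= s0, s0 <= u,
    s0 * l <= n \/ tin (nthi L i) = u \/ tin (nthi L j) = u,
    forall k, i < k < j -> s0 < tin (nthi L k) &
    spread L i j <= s0 + 1 + arrivals s0 n (key (nthi L i)) (key (nthi L j))].

Record qs_inv u n L : Prop := {
  inv_size : 0 < size L;
  inv_last : key (nthi L (size L).-1) = None /\ tin (nthi L (size L).-1) = 0;
  inv_some : forall i, i.+1 < size L -> key (nthi L i) != None;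
  inv_sorted : forall i j, i <= j < size L -> key_le (key (nthi L i)) (key (nthi L j));
  inv_rmin : forall i, i < size L -> rmin_prev L i < rmin (nthi L i) <= rmax (nthi L i);
  inv_gap : forall i, i < size L -> rmax (nthi L i) - rmin_prev L i <= maxn u 1;
  inv_tin : forall i, i < size L -> tin (nthi L i) <= u;
  inv_pair : forall i j, i < j < size L -> pair_bound u n L i j }.

(** * Insertion *)

Section Insert.
Variables (u n : nat) (L : seq item).
Hypothesis hI : qs_inv u n L.
Let x := s n.
Let p := find (fun e => gtk (key e) x) L.
Let L' := insert x u L.
Let old q := q - (p < q).

Lemma insert_pos_lt : p < size L.
Proof.
have [last_none _] := inv_last hI.
rewrite -has_find; apply/(has_nthP dflt); exists (size L).-1.
  by rewrite prednK // (inv_size hI).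
by move: last_none; rewrite /nthi => ->.
Qed.

Lemma gtk_insert_pos : gtk (key (nthi L p)) x.
Proof. by apply: (nth_find dflt (a := fun e => gtk (key e) x)); rewrite has_find insert_pos_lt. Qed.

Lemma key_le_before_insert_pos i : i < p -> key_le (key (nthi L i)) (Some x).
Proof. by move=> lt; rewrite -[key_le _ _]negbK -gtkNle /nthi (before_find dflt lt). Qed.

Lemma size_insert : size L' = (size L).+1.
Proof.
have lt := insert_pos_lt.
by rewrite /L' /insert size_cat /= size_map size_take size_drop lt; lia.
Qed.

Lemma old_lt q : q <= size L -> old q < size L.
Proof. by have := insert_pos_lt; rewrite /old; lia. Qed.

Lemma nth_insert_new : nthi L' p = Item (Some x) u (rmin_prev L p).+1 (rmax (nthi L p)).
Proof. by rewrite /nthi /L' /insert nth_cat size_take insert_pos_lt ltnn subnn. Qed.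

Lemma nth_insert_old q : q <= size L -> q != p ->
  nthi L' q = if p < q then incr (nthi L (old q)) else nthi L (old q).
Proof.
move=> le /eqP ne; have lt := insert_pos_lt.
rewrite /nthi /L' /insert /old nth_cat size_take lt.
case: (ltnP q p) => [lt_qp | le_pq]; first by rewrite nth_take // ltnNge ltnW // subn0.
have lt_pq : p < q by lia.
rewrite lt_pq subn1; have -> : q - p = (q.-1 - p).+1 by lia.
by rewrite /= (nth_map dflt) ?size_drop ?nth_drop ?subnKC //; lia.
Qed.

Lemma key_insert_old q : q <= size L -> q != p -> key (nthi L' q) = key (nthi L (old q)).
Proof. by move=> le ne; rewrite nth_insert_old //; case: ifP. Qed.

Lemma tin_insert_old q : q <= size L -> q != p -> tin (nthi L' q) = tin (nthi L (old q)).
Proof. by move=> le ne; rewrite nth_insert_old //; case: ifP. Qed.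

Lemma rmin_insert q : q <= size L -> q != p -> rmin (nthi L' q) = rmin (nthi L (old q)) + (p < q).
Proof. by move=> le ne; rewrite nth_insert_old //; case: ifP => _ /=; lia. Qed.

Lemma rmax_insert q : q <= size L -> q != p -> rmax (nthi L' q) = rmax (nthi L (old q)) + (p < q).
Proof. by move=> le ne; rewrite nth_insert_old //; case: ifP => _ /=; lia. Qed.

Lemma rmin_prev_insert q : q <= size L -> rmin_prev L' q = rmin_prev L (old q) + (p < q).
Proof.
case: q => [|q] le //=; rewrite /old.
case: (altP (q =P p)) => [-> | ne].
  by rewrite nth_insert_new ltnSn subn1 addn1.
rewrite rmin_insert //; last lia.
case: (ltnP q p) => [lt_qp | le_pq].
  by rewrite /old ltnNge (ltnW lt_qp) ltnS leqNgt lt_qp !subn0.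
have lt_pq : p < q by rewrite ltn_neqAle eq_sym ne.
by rewrite /old lt_pq ltnS le_pq !subn1 /=; case: q lt_pq {le ne le_pq}.
Qed.

Lemma gap_insert q : q <= size L ->
  rmax (nthi L' q) - rmin_prev L' q = rmax (nthi L (old q)) - rmin_prev L (old q).
Proof.
move=> le; rewrite rmin_prev_insert //; case: (altP (q =P p)) => [-> | ne].
  by rewrite nth_insert_new /old ltnn subn0 addn0.
by rewrite rmax_insert // subnDr.
Qed.

Lemma vb_insert_new : vb u L' p = 0.
Proof. by rewrite /vb nth_insert_new band_before. Qed.

Lemma vb_insert_old q : q <= size L -> q != p -> vb u L' q = vb u L (old q).
Proof. by move=> le ne; rewrite /vb tin_insert_old. Qed.

Lemma insert_last : key (nthi L' (size L').-1) = None /\ tin (nthi L' (size L').-1) = 0.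
Proof.
have lt := insert_pos_lt; have [k0 t0] := inv_last hI.
have ne : size L != p by rewrite neq_ltn lt orbT.
by rewrite size_insert /= key_insert_old // tin_insert_old // /old lt subn1.
Qed.

Lemma insert_some i : i.+1 < size L' -> key (nthi L' i) != None.
Proof.
rewrite size_insert => lt_i; have lt := insert_pos_lt.
case: (altP (i =P p)) => [-> | ne]; first by rewrite nth_insert_new.
by rewrite key_insert_old; [apply: (inv_some hI); rewrite /old | |]; lia.
Qed.

Lemma insert_sorted i j : i <= j < size L' -> key_le (key (nthi L' i)) (key (nthi L' j)).
Proof.
rewrite size_insert => /andP[le_ij lt_j]; have lt := insert_pos_lt.
have [le_i le_j] : i <= size L /\ j <= size L by lia.
case: (altP (i =P p)) => [ei | ni]; case: (altP (j =P p)) => [ej | nj].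
- by rewrite ei ej key_le_refl.
- have le_pj : p <= old j < size L by rewrite /old; lia.
  rewrite ei nth_insert_new key_insert_old //.
  apply: key_le_trans (inv_sorted hI le_pj).
  by apply: key_le_total; rewrite -gtkNle gtk_insert_pos.
- rewrite ej nth_insert_new key_insert_old //.
  by apply: key_le_before_insert_pos; rewrite /old; lia.
- by rewrite !key_insert_old //; apply: (inv_sorted hI); rewrite /old; lia.
Qed.

Lemma insert_rmin i : i < size L' -> rmin_prev L' i < rmin (nthi L' i) <= rmax (nthi L' i).
Proof.
rewrite size_insert => lt_i; rewrite rmin_prev_insert //.
case: (altP (i =P p)) => [-> | ne].
  have := inv_rmin hI insert_pos_lt; rewrite nth_insert_new /old ltnn subn0 /=; lia.
by have := inv_rmin hI (old_lt lt_i); rewrite rmin_insert ?rmax_insert //; lia.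
Qed.

Lemma insert_gap i : i < size L' -> rmax (nthi L' i) - rmin_prev L' i <= maxn u 1.
Proof. by rewrite size_insert => lt_i; rewrite gap_insert //; apply/(inv_gap hI)/old_lt. Qed.

Lemma insert_tin i : i < size L' -> tin (nthi L' i) <= u.
Proof.
rewrite size_insert => lt_i; case: (altP (i =P p)) => [-> | ne]; first by rewrite nth_insert_new.
by rewrite tin_insert_old //; apply: (inv_tin hI); apply: old_lt.
Qed.

Lemma in_key_range_insert i j : i < p <= j -> j < size L ->
  in_key_range (key (nthi L i)) (key (nthi L j)) x.
Proof.
move=> /andP[lt_ip le_pj] lt_j; rewrite /in_key_range key_le_before_insert_pos //=.
by apply: key_le_gtk gtk_insert_pos; apply: (inv_sorted hI); rewrite le_pj.
Qed.

Lemma insert_pair_new i j : i < j < size L' -> (i == p) || (j == p) -> pair_bound u n.+1 L' i j.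
Proof.
rewrite size_insert => /andP[lt_ij lt_j] new_end valley'.
have adj : j = i.+1.
  case: (ltngtP j i.+1) => // [lt_ji | gt_ji]; first lia.
  have [lt1 lt2] := valley' i.+1 ltac:(lia).
  by case/orP: new_end => /eqP e; [move: lt1 | move: lt2]; rewrite e vb_insert_new.
subst j; exists u; split => //.
- by split; apply: insert_tin; rewrite size_insert; lia.
- by right; case/orP: new_end => /eqP ->; [left | right]; rewrite nth_insert_new.
- by move=> k; lia.
- have le_j : i.+1 <= size L by rewrite -ltnS.
  rewrite /spread -[rmin _]/(rmin_prev L' i.+1) gap_insert //.
  by have := inv_gap hI (old_lt le_j); lia.
Qed.

Hypothesis n_lt : n < u * l.

Lemma insert_pair_old i j : i < j < size L' -> i != p -> j != p -> pair_bound u n.+1 L' i j.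
Proof.
rewrite size_insert => /andP[lt_ij lt_j] ni nj valley'; have lt := insert_pos_lt.
have [le_i le_j] : i <= size L /\ j <= size L by lia.
have old_ij : old i < old j < size L by rewrite /old; lia.
have [|s0 [[ti tj] le_s0 dis btw hspread]] := inv_pair hI old_ij.
  move=> k /andP[lt_ik lt_kj]; set k' := k + (p <= k).
  have [|lt1 lt2] := valley' k'; first by rewrite /k' /old in lt_ik lt_kj *; lia.
  have old_k' : old k' = k by rewrite /old /k'; lia.
  by rewrite !vb_insert_old ?old_k' // /k' in lt1 lt2 *; lia.
have p_between_arrived : i < p < j -> s0 * l <= n.
  move=> between; case: dis => [// | t_u].
  have [lt1 lt2] := valley' p between.
  rewrite vb_insert_new !vb_insert_old // in lt1 lt2.
  by case: t_u => t_u; [move: lt1 | move: lt2]; rewrite /vb t_u band_before.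
exists s0; split; rewrite ?tin_insert_old //.
- by case: dis => [?|]; [left; lia | right].
- move=> k /andP[lt_ik lt_kj]; case: (altP (k =P p)) => [ek | nk].
    have : s0 * l < u * l by have := p_between_arrived; rewrite -ek lt_ik lt_kj; lia.
    by rewrite ek nth_insert_new ltn_mul2r => /andP[].
  by rewrite tin_insert_old //; [apply: btw; rewrite /old |]; lia.
- rewrite /spread !key_insert_old // rmin_insert // rmax_insert //.
  move: hspread; rewrite /spread; case: (boolP (i < p < j)) => between.
    have in_range : in_key_range (key (nthi L (old i))) (key (nthi L (old j))) x.
      by apply: in_key_range_insert; rewrite /old; lia.
    by rewrite arrivalsS ?p_between_arrived // in_range; lia.
  by have := arrivals_mono s0 n (key (nthi L (old i))) (key (nthi L (old j))); lia.
Qed.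

Lemma qs_inv_insert : qs_inv u n.+1 L'.
Proof.
split.
- by rewrite size_insert.
- exact: insert_last.
- exact: insert_some.
- exact: insert_sorted.
- exact: insert_rmin.
- exact: insert_gap.
- exact: insert_tin.
- move=> i j lt_ij; case: (boolP ((i == p) || (j == p))) => [new_end | /norP[ni nj]].
    exact: insert_pair_new.
  exact: insert_pair_old.
Qed.

End Insert.

Lemma qs_inv_next_step u L : qs_inv u (u * l) L -> qs_inv u.+1 (u * l) L.
Proof.
case=> size_gt0 last some sorted rmin gap tin_le pair; split => //.
- by move=> i lt_i; apply: leq_trans (gap i lt_i) _; lia.
- by move=> i lt_i; apply: leqW; apply: tin_le.
move=> i j lt_ij valley'.
have [|s0 [t_le le_s0 _ btw hspread]] := pair i j lt_ij; last first.
  by exists s0; split => //; [exact: leqW | left; rewrite leq_mul2r le_s0 orbT].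
move=> k /andP[lt_ik lt_kj]; have [lt1 lt2] := valley' k ltac:(lia).
rewrite /vb !ltnNge in lt1 lt2 *.
by split; [move: lt1 | move: lt2]; apply: contra; apply: band_succ_mono; apply: tin_le; lia.
Qed.

Lemma qs_inv_insert_all u n0 m L : n0 + m <= u * l -> qs_inv u n0 L ->
  qs_inv u (n0 + m) (foldl (fun L k => insert (s k) u L) L (iota n0 m)).
Proof.
elim: m n0 L => [|m IH] n0 L le hI; first by rewrite addn0.
rewrite /= -addSnnS; apply: IH; first lia.
by apply: qs_inv_insert => //; lia.
Qed.

Lemma qs_inv_insert_chunk u L :
  qs_inv u (u * l) L -> qs_inv u.+1 (u.+1 * l) (insert_chunk l s u.+1 L).
Proof.
move=> /qs_inv_next_step hI; rewrite /insert_chunk mulSn addnC.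
by apply: qs_inv_insert_all; rewrite // mulSn addnC.
Qed.

(** * Deletion *)

Lemma segstart_spec t L m : m < size L ->
  [/\ segstart t L m <= m,
      forall k, segstart t L m <= k < m -> vb t L k < vb t L m &
      0 < segstart t L m -> vb t L m <= vb t L (segstart t L m).-1].
Proof.
move=> lt_m; rewrite /segstart /seglen.
set P := fun e : item => ~~ (band (tin e) t < vb t L m).
have size_r : size (rev (take m L)) = m by rewrite size_rev size_take lt_m.
have nth_r j : j < m -> nth dflt (rev (take m L)) j = nthi L (m - j.+1).
  by move=> lt_j; rewrite nth_rev size_take lt_m ?nth_take //; lia.
have le_find : find P (rev (take m L)) <= m by rewrite -{2}size_r find_size.
split; first lia.
- move=> k lt_k.
  have := before_find dflt (a := P) (s := rev (take m L)) (i := m - k.+1) ltac:(lia).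
  rewrite nth_r; last lia.
  have -> : m - (m - k.+1).+1 = k by lia.
  by rewrite /P => /negbFE.
- move=> lt_find; have has_P : has P (rev (take m L)) by rewrite has_find size_r; lia.
  have := nth_find dflt has_P; rewrite nth_r; last lia.
  have -> : m - (find P (rev (take m L))).+1 = (m - find P (rev (take m L))).-1 by lia.
  by rewrite /P -leqNgt.
Qed.

Section Telescope.
Variables (u n : nat) (L : seq item).
Hypothesis hI : qs_inv u n L.

Lemma rmin_prev_mono a b : a <= b <= size L -> rmin_prev L a <= rmin_prev L b.
Proof.
move=> /andP[]; elim: b => [|b IH]; first by rewrite leqn0 => /eqP ->.
rewrite leq_eqVlt ltnS => /predU1P[-> // | le_ab] lt_b.
apply: leq_trans (IH le_ab (ltnW lt_b)) _.
by case/andP: (inv_rmin hI lt_b) => /ltnW.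
Qed.

Lemma sum_gg a b : a <= b <= size L -> \sum_(a <= k < b) gg L k = rmin_prev L b - rmin_prev L a.
Proof.
move=> /andP[le_ab le_b]; apply: telescope_sumn_in => // i /andP[_ lt_i].
by case/andP: (inv_rmin hI (leq_trans lt_i le_b)) => /ltnW.
Qed.

Lemma gstar_gg_Delta t m : m.+1 < size L ->
  gstar t L m + gg L m.+1 + Delta L m.+1 = rmax (nthi L m.+1) - rmin_prev L (segstart t L m).
Proof.
move=> lt_m; have [le_st _ _] := segstart_spec t (ltnW lt_m).
have -> : gstar t L m + gg L m.+1 = \sum_(segstart t L m <= k < m.+2) gg L k.
  by rewrite /gstar !big_nat_recr //= 1?addnC //; lia.
rewrite sum_gg /Delta; last lia.
have := rmin_prev_mono (a := segstart t L m) (b := m.+1) ltac:(lia).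
by have := inv_rmin hI lt_m; rewrite /=; lia.
Qed.

End Telescope.

Section Delete.
Variables (u m : nat) (L : seq item).
Hypotheses (hI : qs_inv u (u * l) L) (hdel : deletable u L m).
Let st := segstart u L m.
Let L' := delete_at u L m.
Let kept q := if q < st then q else q + (m.+1 - st).

Lemma deleted_lt_size : m.+1 < size L.
Proof. by case/and3P: hdel. Qed.

Lemma segstart_le : st <= m.
Proof. by case: (segstart_spec u (ltnW deleted_lt_size)). Qed.

Lemma size_delete : size L' = size L - (m.+1 - st).
Proof.
have := segstart_le; have := deleted_lt_size.
by rewrite /L' /delete_at size_cat size_take size_drop; case: ifP; lia.
Qed.

Lemma kept_lt q : q < size L' -> kept q < size L.
Proof. by rewrite size_delete /kept; case: ifP; lia. Qed.

Lemma nth_delete q : nthi L' q = nthi L (kept q).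
Proof.
have := segstart_le; have := deleted_lt_size => lt_m le_st.
rewrite /nthi /L' /delete_at /kept nth_cat size_take (_ : (st < size L) = true); last lia.
by case: ifP => lt_q; rewrite ?nth_take // nth_drop; congr nth; lia.
Qed.

Lemma kept_st : kept st = m.+1.
Proof. by have := segstart_le; rewrite /kept ltnn; lia. Qed.

Lemma kept_mono q1 q2 : q1 < q2 -> kept q1 < kept q2.
Proof. by rewrite /kept; case: ifP; case: ifP; lia. Qed.

Lemma leq_kept : {mono kept : q1 q2 / q1 <= q2}.
Proof. exact/leq_mono/kept_mono. Qed.

Lemma ltn_kept : {mono kept : q1 q2 / q1 < q2}.
Proof. exact/leqW_mono/leq_kept. Qed.

Lemma kept_surj k : (k < st) || (m < k) -> exists k', kept k' = k.
Proof.
case/orP=> [lt_k | gt_k]; first by exists k; rewrite /kept lt_k.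
by exists (k - (m.+1 - st)); have := segstart_le; rewrite /kept; case: ifP; lia.
Qed.

Lemma rmin_prev_delete q :
  rmin_prev L' q = if q == st then rmin_prev L st else rmin_prev L (kept q).
Proof.
case: q => [|q] /=.
  by case: eqP => [<- | ne] //; rewrite /kept (_ : 0 < st) //; lia.
rewrite nth_delete /kept; case: eqP => [<- | ne]; first by rewrite ltnSn.
case: (ltnP q st) => [lt_q | ge_q]; first by rewrite (_ : q.+1 < st) //; lia.
by rewrite (_ : q.+1 < st = false) ?addSn //; lia.
Qed.

Lemma gap_segstart : rmax (nthi L m.+1) - rmin_prev L st <= u.
Proof. by case/and3P: hdel => lt_m _; rewrite (gstar_gg_Delta hI). Qed.

Lemma delete_last : key (nthi L' (size L').-1) = None /\ tin (nthi L' (size L').-1) = 0.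
Proof.
have := segstart_le; have := deleted_lt_size => lt_m le_st.
rewrite nth_delete size_delete /kept ifF; last lia.
by rewrite (_ : _ + _ = (size L).-1); [exact: (inv_last hI) | lia].
Qed.

Lemma delete_rmin q : q < size L' -> rmin_prev L' q < rmin (nthi L' q) <= rmax (nthi L' q).
Proof.
move=> lt_q; rewrite rmin_prev_delete nth_delete; case: eqP => [-> | _].
  have := segstart_le; have := deleted_lt_size => lt_m le_st.
  have := rmin_prev_mono hI (a := st) (b := m.+1) ltac:(lia).
  by rewrite kept_st; have := inv_rmin hI lt_m; lia.
exact: (inv_rmin hI (kept_lt lt_q)).
Qed.

Lemma delete_gap q : q < size L' -> rmax (nthi L' q) - rmin_prev L' q <= maxn u 1.
Proof.
move=> lt_q; rewrite rmin_prev_delete nth_delete; case: eqP => [-> | _].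
  by rewrite kept_st; have := gap_segstart; lia.
exact: (inv_gap hI (kept_lt lt_q)).
Qed.

Lemma valley_delete q1 q2 : q1 < q2 -> ~~ ((q1.+1 == st) && (q2 == st)) ->
  valley u L' q1 q2 -> valley u L (kept q1) (kept q2).
Proof.
move=> lt12 not_adj valley' k /andP[lt_ik lt_kj].
have vb_kept q : vb u L' q = vb u L (kept q) by rewrite /vb nth_delete.
case: (boolP ((k < st) || (m < k))) => [/kept_surj[k' ek] | deleted].
  move: lt_ik lt_kj; rewrite -ek !ltn_kept -!vb_kept => lt_ik lt_kj.
  by apply: valley'; rewrite lt_ik.
have := segstart_le; have := deleted_lt_size => lt_m le_st.
have lt_m1 : m < size L by lia.
have [_ seg_lt seg_max] := segstart_spec u lt_m1; rewrite -/st in seg_lt seg_max.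
have le_km : vb u L k <= vb u L m.
  by case: (ltngtP k m) => [lt_km | | ->] //; [apply: ltnW; apply: seg_lt | ]; lia.
have lt_q1 : q1 < st by rewrite -ltn_kept kept_st; lia.
have le_q2 : st <= q2.
  by rewrite leqNgt; apply/negP => lt_q2; move: lt_kj; rewrite /kept lt_q2; lia.
case/nandP: not_adj => [ne1 | ne2].
- have between : q1 < st.-1 < q2 by lia.
  have [lt1 lt2] := valley' _ between.
  have kept_prev : kept st.-1 = st.-1 by rewrite /kept ifT //; lia.
  rewrite !vb_kept kept_prev in lt1 lt2.
  by have := seg_max ltac:(lia); lia.
- have between : q1 < st < q2 by lia.
  have [lt1 lt2] := valley' _ between.
  rewrite !vb_kept kept_st in lt1 lt2.
  by case/and3P: hdel => _ le_next _; lia.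
Qed.

Lemma delete_pair q1 q2 : q1 < q2 < size L' -> pair_bound u (u * l) L' q1 q2.
Proof.
move=> /andP[lt12 lt2] valley'.
have tin_L' q : q < size L' -> tin (nthi L' q) <= u.
  by move=> lt_q; rewrite nth_delete; apply: (inv_tin hI); apply: kept_lt.
case: (boolP ((q1.+1 == st) && (q2 == st))) => [/andP[/eqP e1 /eqP e2] | not_adj].
  exists u; split => //.
  - by split; apply: tin_L'; lia.
  - by left.
  - by move=> k; lia.
  rewrite /spread !nth_delete e2 kept_st /kept -e1 ltnSn.
  by have := gap_segstart; rewrite -e1 /=; lia.
have lt_kept : kept q1 < kept q2 < size L by rewrite ltn_kept lt12 kept_lt.
have [|s0 [t_le le_s0 dis btw hspread]] := inv_pair hI lt_kept.
  exact: valley_delete.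
exists s0; rewrite /spread !nth_delete; split => //.
by move=> k /andP[lt1k ltk2]; rewrite nth_delete; apply: btw; rewrite !ltn_kept lt1k.
Qed.

Lemma qs_inv_delete : qs_inv u (u * l) L'.
Proof.
have := segstart_le; have := deleted_lt_size => lt_m le_st.
split.
- by rewrite size_delete; lia.
- exact: delete_last.
- move=> q lt_q; rewrite nth_delete; apply: (inv_some hI).
  by move: lt_q; rewrite size_delete /kept; case: ifP; lia.
- move=> q1 q2 /andP[le12 lt2]; rewrite !nth_delete; apply: (inv_sorted hI).
  by rewrite leq_kept le12 kept_lt.
- exact: delete_rmin.
- exact: delete_gap.
- by move=> q lt_q; rewrite nth_delete; apply: (inv_tin hI); apply: kept_lt.
- exact: delete_pair.
Qed.

End Delete.

Lemma qs_inv_init : qs_inv 0 0 [:: inf_item].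
Proof. by split => //= [[|i] [|j] | [] | [] | [] | i j] //; lia. Qed.

Lemma qs_inv_run t L : run l s t L -> qs_inv t (t * l) L.
Proof.
elim=> [|u L0 L1 _ hI [steps _]]; first exact: qs_inv_init.
move: (qs_inv_insert_chunk hI); elim: steps => // L2 i L3 hdel _ IH hI2.
by apply: IH; apply: qs_inv_delete.
Qed.

Lemma run_undeletable t L : run l s t L -> forall i, ~~ deletable t L i.
Proof. by case=> [|u L0 L1 _ [_ final]] // [|i]. Qed.


(** * Counting type-1 elements *)

Section Count.
Variables (t : nat) (L : seq item).
Hypotheses (hI : qs_inv t (t * l) L) (hnd : forall i, ~~ deletable t L i).

Definition next_ge i := i.+1 + find (fun e => vb t L i <= band (tin e) t) (drop i.+1 L).

Lemma next_ge_spec i : type1 t L i ->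
  [/\ i.+1 < next_ge i, next_ge i < size L, vb t L i <= vb t L (next_ge i) &
      forall k, i < k < next_ge i -> vb t L k < vb t L i].
Proof.
case/andP=> lt_i lt_v; have [_ t_last] := inv_last hI.
set P := fun e : item => vb t L i <= band (tin e) t.
have nth_d j : nth dflt (drop i.+1 L) j = nthi L (i.+1 + j) by rewrite nth_drop.
have has_P : has P (drop i.+1 L).
  apply/(has_nthP dflt); exists ((size L).-1 - i.+1); first by rewrite size_drop; lia.
  rewrite nth_d (_ : i.+1 + _ = (size L).-1); last lia.
  by rewrite /P t_last; apply: band_arrival_anti.
have lt_find : find P (drop i.+1 L) < size L - i.+1 by rewrite -size_drop -has_find.
have find_gt0 : 0 < find P (drop i.+1 L).
  rewrite lt0n; apply: contraTneq lt_v => e0.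
  by have := nth_find dflt has_P; rewrite e0 nth_d addn0 /P -leqNgt.
rewrite /next_ge -/P; split; try lia.
- by have := nth_find dflt has_P; rewrite nth_d.
- move=> k lt_k; have lt_kf : k - i.+1 < find P (drop i.+1 L) by lia.
  have := before_find dflt lt_kf; rewrite nth_d subnKC; last lia.
  by rewrite /P ltnNge => ->.
Qed.

Lemma spread_next_ge i : type1 t L i -> t < spread L i (next_ge i).
Proof.
move=> t1; have [lt_i lt_n le_v below] := next_ge_spec t1.
set p := (next_ge i).-1; have e_p : p.+1 = next_ge i by rewrite /p; lia.
have lt_pi : vb t L p < vb t L i by apply: below; lia.
have := hnd p; rewrite /deletable e_p lt_n (_ : vb t L p <= _) /=; last lia.
rewrite -ltnNge (gstar_gg_Delta hI) ?e_p //.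
have lt_p : p < size L by lia.
have [le_stp seg_lt _] := segstart_spec t lt_p.
have lt_st : i < segstart t L p.
  rewrite ltnNge; apply/negP => le_st.
  by have := seg_lt i; rewrite le_st (_ : i < p) //=; lia.
have := rmin_prev_mono hI (a := i.+1) (b := segstart t L p) ltac:(lia).
by rewrite /spread /=; lia.
Qed.

Definition anchored i s0 : bool :=
  [&& tin (nthi L i) <= s0, s0 < t,
      all (fun k => s0 < tin (nthi L k)) (index_iota i.+1 (next_ge i)) &
      t - s0 <= arrivals s0 (t * l) (key (nthi L i)) (key (nthi L (next_ge i)))].

Definition anchor i := find (anchored i) (iota 0 t).

Lemma exists_anchored i : type1 t L i -> has (anchored i) (iota 0 t).
Proof.
move=> t1; have [lt_i lt_n le_v below] := next_ge_spec t1.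
have [|s0 [[t_i _] _ _ btw hspread]] := inv_pair hI (i := i) (j := next_ge i) ltac:(lia).
  by move=> k /below lt_k; lia.
have lt_i1 : i.+1 < size L by lia.
have lt_s0 : s0 < t by have := btw i.+1 ltac:(lia); have := inv_tin hI lt_i1; lia.
apply/hasP; exists s0; first by rewrite mem_iota.
apply/and4P; split => //; last by have := spread_next_ge t1; lia.
by apply/allP => k; rewrite mem_index_iota => /btw.
Qed.

Lemma anchor_spec i : type1 t L i ->
  [/\ tin (nthi L i) <= anchor i, anchor i < t,
      forall k, i < k < next_ge i -> anchor i < tin (nthi L k) &
      t - anchor i <= arrivals (anchor i) (t * l) (key (nthi L i)) (key (nthi L (next_ge i)))].
Proof.
move=> t1; have has_a := exists_anchored t1.
have lt_a : anchor i < t by rewrite -[t in _ < t](size_iota 0) -has_find.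
have /and4P[t_le _ /allP btw cnt] := nth_find 0 has_a.
rewrite nth_iota // add0n in t_le btw cnt.
by split => // k lt_k; apply: btw; rewrite mem_index_iota.
Qed.

Definition counted_by i m : bool :=
  (anchor i * l <= m) && in_key_range (key (nthi L i)) (key (nthi L (next_ge i))) (s m).

Definition scale i := trunc_log 2 (t - anchor i).

Lemma scale_bounds i : type1 t L i -> 2 ^ scale i <= t - anchor i < 2 ^ (scale i).+1.
Proof. by case/anchor_spec=> _ lt_a _ _; apply: trunc_log_bounds; lia. Qed.

Lemma counted_nested x y m : type1 t L y -> x < y ->
  counted_by x m -> counted_by y m -> y < next_ge x.
Proof.
case/andP=> lt_y _ lt_xy /andP[_ /andP[_ gt_x]] /andP[_ /andP[le_y _]].
rewrite ltnNge; apply/negP => le_ny.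
have le_keys := inv_sorted hI (i := next_ge x) (j := y) ltac:(lia).
by move: (key_le_gtk le_keys gt_x); rewrite gtkNle le_y.
Qed.

Lemma no_four_counters k m x0 x1 x2 x3 : x0 < x1 -> x1 < x2 -> x2 < x3 ->
  type1 t L x0 -> type1 t L x1 -> type1 t L x2 -> type1 t L x3 ->
  scale x0 = k -> scale x3 = k ->
  counted_by x0 m -> counted_by x1 m -> counted_by x2 m -> counted_by x3 m -> False.
Proof.
move=> lt01 lt12 lt23 t0 t1 t2 t3 sc0 sc3 c0 c1 c2 c3.
have [_ _ arrived _] := anchor_spec t0.
have old1 : anchor x0 < tin (nthi L x1).
  by apply: arrived; rewrite lt01 (counted_nested t1 lt01 c0 c1).
have [_ _ _ below1] := next_ge_spec t1.
have v21 : vb t L x2 < vb t L x1 by apply: below1; rewrite lt12 (counted_nested t2 lt12 c1 c2).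
have [_ _ _ below2] := next_ge_spec t2.
have v32 : vb t L x3 < vb t L x2 by apply: below2; rewrite lt23 (counted_nested t3 lt23 c2 c3).
have [young3 _ _ _] := anchor_spec t3.
have := scale_bounds t0; have := scale_bounds t3; rewrite sc0 sc3 => /andP[lo3 _] /andP[_ hi0].
have tin1 : tin (nthi L x1) <= t by apply: (inv_tin hI); case/andP: t1; lia.
have tin3 : tin (nthi L x3) <= t by apply: (inv_tin hI); case/andP: t3; lia.
have band1 : vb t L x1 <= k.+1 by apply: band_leq_of_age => //; lia.
have band3 : k <= vb t L x3 by apply: band_geq_of_age => //; lia.
lia.
Qed.

Lemma counted_same_scale_le3 k m G : sorted ltn G ->
  {in G, forall i, type1 t L i && (scale i == k)} -> count (counted_by^~ m) G <= 3.
Proof.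
move=> sG hG; rewrite -size_filter.
set H := [seq i <- G | counted_by i m].
have sH : sorted ltn H by apply: sorted_filter => //; exact: ltn_trans.
have hH : all (fun i => [&& type1 t L i, scale i == k & counted_by i m]) H.
  by apply/allP => i; rewrite mem_filter => /andP[-> /hG/andP[-> ->]].
case: H sH hH => [|x0 [|x1 [|x2 [|x3 H]]]] //=.
move=> /and4P[lt01 lt12 lt23 _].
move=> /and5P[/and3P[t0 /eqP sc0 c0] /and3P[t1 _ c1] /and3P[t2 _ c2] /and3P[t3 /eqP sc3 c3] _].
by have := no_four_counters lt01 lt12 lt23 t0 t1 t2 t3 sc0 sc3 c0 c1 c2 c3.
Qed.

Lemma arrivals_counted i M0 : M0 <= anchor i * l ->
  arrivals (anchor i) (t * l) (key (nthi L i)) (key (nthi L (next_ge i)))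
  <= count (counted_by i) (index_iota M0 (t * l)).
Proof.
move=> le_M0; rewrite /arrivals /index_iota.
case: (leqP (anchor i * l) (t * l)) => [le_at | lt_ta].
  2: by have -> : t * l - anchor i * l = 0 by lia.
rewrite (_ : t * l - M0 = anchor i * l - M0 + (t * l - anchor i * l)); last lia.
rewrite iotaD count_cat subnKC //; apply: leq_trans (leq_addl _ _); apply: eq_leq.
by apply: eq_in_count => m; rewrite mem_iota /counted_by => /andP[-> _].
Qed.

Lemma same_scale_type1_le k : 0 < l ->
  count (fun i => type1 t L i && (scale i == k)) (iota 0 (size L)) <= 6 * l.
Proof.
move=> l_gt0; rewrite -size_filter; set G := [seq i <- _ | _].
have hG : {in G, forall i, type1 t L i && (scale i == k)}.
  by move=> i; rewrite mem_filter => /andP[].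
have sG : sorted ltn G by apply: sorted_filter; [exact: ltn_trans | exact: iota_ltn_sorted].
set R := index_iota ((t.+1 - 2 ^ k.+1) * l) (t * l).
have lower : 2 ^ k * size G <= \sum_(i <- G) count (counted_by i) R.
  rewrite -sum1_size big_distrr /= !big_seq; apply: leq_sum => i /hG/andP[t1 /eqP sc].
  have [_ _ _ cnt] := anchor_spec t1; have /andP[lo hi] := scale_bounds t1; rewrite sc in lo hi.
  rewrite muln1; apply: leq_trans lo (leq_trans cnt (arrivals_counted _)).
  by rewrite leq_mul2r; apply/orP; right; lia.
have upper : \sum_(i <- G) count (counted_by i) R <= 3 * size R.
  rewrite sum_count_exchange -sum1_size big_distrr leq_sum // => m _.
  exact: leq_trans (counted_same_scale_le3 m sG hG) _.
have size_R : size R <= 2 ^ k.+1 * l.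
  by rewrite size_iota -mulnBl leq_mul2r; apply/orP; right; lia.
have : 2 ^ k * size G <= 2 ^ k * (6 * l) by rewrite expnS in size_R; lia.
by rewrite leq_pmul2l // expn_gt0.
Qed.

Lemma num_type1_le : 0 < l -> num_type1 t L <= 6 * l * (trunc_log 2 t).+1.
Proof.
move=> l_gt0; rewrite /num_type1 (count_partition (f := scale) (K := (trunc_log 2 t).+1)).
  apply: (@leq_trans (\sum_(k < (trunc_log 2 t).+1) 6 * l)).
    by apply: leq_sum => k _; apply: same_scale_type1_le.
  by rewrite sum_nat_const card_ord mulnC.
move=> i _ t1; have [_ lt_a _ _] := anchor_spec t1.
by rewrite ltnS; apply: leq_trunc_log; lia.
Qed.

End Count.
End QS.

Theorem mainTheorem6 :
  exists C : nat,
    forall (d : Order.disp_t) (T : orderType d) (l : nat) (s : nat -> T)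
           (t : nat) (L : seq (@item d T)),
      (0 < l)%N -> run l s t L ->
      (num_type1 t L <= C * l * (trunc_log 2 t).+1)%N.
Proof.
exists 6 => d T l s t L l_gt0 hrun.
exact: num_type1_le (qs_inv_run hrun) (run_undeletable hrun) l_gt0.
Qed.
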